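(* Let $M\ge0$ and $\kappa\ge1$ be integers. Let $x(t)=\sum_{\gamma\in F}q_\gamma(t)e^{2\pi i\gamma t}$, $t\in\mathbb R$, where $F$ is a finite subset of $[0,1)$ of cardinality $\kappa$ and each $q_\gamma$ is a non-zero complex polynomial of degree at most $M$. Then $x$ can be completely recovered from its values $x(\ell)$, $\ell=0,1,\dots,2\kappa(M+1)-1$; that is, if $\tilde x(t)=\sum_{\gamma\in\tilde F}\tilde q_\gamma(t)e^{2\pi i\gamma t}$ is another function of the same form (with $\tilde F\subseteq[0,1)$ of cardinality $\kappa$ and non-zero polynomials $\tilde q_\gamma$ of degree at most $M$) with $\tilde x(\ell)=x(\ell)$ for $\ell=0,\dots,2\kappa(M+1)-1$, then $\tilde F=F$ and $\tilde q_\gamma=q_\gamma$ for all $\gamma\in F$. *)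

From HB Require Import structures.
From mathcomp Require Import all_boot all_order all_algebra.
From mathcomp Require Import complex.
From mathcomp Require Import reals trigo.
Set Implicit Arguments. Unset Strict Implicit. Unset Printing Implicit Defensive.
Import Order.TTheory GRing.Theory Num.Theory.
Local Open Scope ring_scope.
Local Open Scope complex_scope.

Definition expi (R : realType) (theta : R) : R[i] := (cos theta +i* sin theta)%C.

Definition expsum (R : realType) (F : seq R) (q : R -> {poly R[i]}) (t : R) : R[i] :=
  \sum_(g <- F) (q g).[t%:C] * expi (2 * pi * g * t).

Definition admissible (R : realType) (M kappa : nat) (F : seq R)
    (q : R -> {poly R[i]}) : Prop :=
  [/\ uniq F, size F = kappa,
      (forall g, g \in F -> 0 <= g /\ g < 1)
    & (forall g, g \in F -> q g != 0 /\ (size (q g) <= M.+1)%N)].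

From HB Require Import structures.
From mathcomp Require Import all_boot all_order all_algebra.
From mathcomp Require Import complex.
From mathcomp Require Import reals trigo.
From mathcomp Require Import ring lra zify.
Set Implicit Arguments. Unset Strict Implicit. Unset Printing Implicit Defensive.
Import Order.TTheory GRing.Theory Num.Theory.
Local Open Scope ring_scope.

(* Sampled at the integers l, x becomes  sum_g q_g(l) z_g^l  with
   z_g = e^{2 pi i g}, and the z_g are pairwise distinct since g ranges over
   [0,1).  Extending q_g by 0 off F, the difference of two admissible sums is a
   sum of the same shape over F u F' whose polynomials have total size at most
   2 kappa (M+1).  Such a sum  sum_a p_a(l) z_a^l, with distinct nonzero z_a,
   that vanishes for l < D, where D bounds the total size of the p_a, has all
   p_a = 0.  By induction on D: if p_j <> 0, the operator
   p_a |-> z_a p_a(. + 1) - z_j p_a  preserves vanishing at one point less, does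
   not increase any size and strictly decreases the size of p_j.  So it kills
   every p_a, which forces p_a = 0 for a <> j and p_j(. + 1) = p_j; the latter
   makes p_j vanish at all integers. *)

Section PolyShift.
Variable C : idomainType.
Implicit Types p : {poly C}.

Definition poly_shift p := p \Po ('X + 1%:P).

Lemma size_poly_shift p : size (poly_shift p) = size p.
Proof. by rewrite size_comp_poly2 // size_XaddC. Qed.

Lemma lead_coef_poly_shift p : lead_coef (poly_shift p) = lead_coef p.
Proof. by rewrite lead_coef_comp ?size_XaddC // lead_coefXaddC expr1n mulr1. Qed.

Lemma horner_poly_shift p x : (poly_shift p).[x] = p.[x + 1].
Proof. by rewrite horner_comp !hornerE. Qed.

Lemma coef_poly_shift_last p :
  (poly_shift p)`_(size p).-1 = lead_coef p.
Proof. by rewrite -lead_coef_poly_shift lead_coefE size_poly_shift. Qed.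

Lemma size_poly_shiftB_lt p : p != 0 -> (size (poly_shift p - p)%R < size p)%N.
Proof.
move=> p_neq0; have p_gt0 : (0 < size p)%N by rewrite size_poly_gt0.
rewrite -(prednK p_gt0) ltnS; apply/leq_sizeP => j le_pj.
rewrite coefB; have [->|ne_j] := eqVneq j (size p).-1.
  by rewrite coef_poly_shift_last -lead_coefE subrr.
have lt_pj : (size p <= j)%N by rewrite -(prednK p_gt0) ltn_neqAle eq_sym ne_j.
by rewrite !nth_default ?subrr ?size_poly_shift.
Qed.

Lemma size_scale_shiftB_le a b p :
  (size (a *: poly_shift p - b *: p)%R <= size p)%N.
Proof.
apply: leq_trans (size_polyD _ _) _; rewrite size_polyN geq_max.
by rewrite (leq_trans (size_scale_leq _ _)) ?size_poly_shift // size_scale_leq.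
Qed.

Lemma scale_shiftB_eq0 a b p : a != b -> a *: poly_shift p - b *: p = 0 -> p = 0.
Proof.
move=> neq_ab eq0; apply/eqP; apply: contraT => p_neq0.
have : (a *: poly_shift p - b *: p)`_(size p).-1 = 0 by rewrite eq0 coef0.
rewrite coefB !coefZ coef_poly_shift_last -lead_coefE -mulrBl.
by move/eqP; rewrite mulf_eq0 subr_eq0 (negbTE neq_ab) lead_coef_eq0 (negbTE p_neq0).
Qed.

End PolyShift.

Lemma poly_shift_fixed_eq0 (C : numDomainType) (p : {poly C}) :
  poly_shift p = p -> p.[0] = 0 -> p = 0.
Proof.
move=> fix_p p0; have p_nat n : p.[n%:R] = 0.
  by elim: n => [//|n IHn]; rewrite -natr1 -horner_poly_shift fix_p.
apply: (@roots_geq_poly_eq0 _ _ [seq n%:R | n <- iota 0 (size p)]).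
- by apply/allP => _ /mapP[n _ ->]; apply/rootP.
- by rewrite map_inj_uniq ?iota_uniq //; apply: (mulrIn (oner_neq0 C)).
- by rewrite size_map size_iota.
Qed.

Section ExpPolySum.
Variables (C : numDomainType) (T : eqType) (U : seq T) (z : T -> C).
Hypotheses (U_uniq : uniq U) (z_inj : {in U &, injective z})
  (z_neq0 : forall a, a \in U -> z a != 0).
Implicit Types p : T -> {poly C}.

Definition exppoly_sum p (l : nat) := \sum_(a <- U) (p a).[l%:R] * z a ^+ l.

Definition exppoly_diff (j : T) p (a : T) := z a *: poly_shift (p a) - z j *: p a.

Lemma exppoly_sum_diff j p l :
  exppoly_sum (exppoly_diff j p) l = exppoly_sum p l.+1 - z j * exppoly_sum p l.
Proof.
rewrite /exppoly_sum mulr_sumr -sumrB; apply: eq_bigr => a _.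
by rewrite hornerD hornerN !hornerZ horner_poly_shift -natr1 exprS; ring.
Qed.

Lemma sum_size_exppoly_diff_lt j p : j \in U -> p j != 0 ->
  (\sum_(a <- U) size (exppoly_diff j p a) < \sum_(a <- U) size (p a))%N.
Proof.
move=> jU pj_neq0; rewrite !(bigD1_seq j) //= -addSn leq_add //.
  rewrite /exppoly_diff -scalerBr.
  exact: leq_ltn_trans (size_scale_leq _ _) (size_poly_shiftB_lt pj_neq0).
by apply: leq_sum => a _; apply: size_scale_shiftB_le.
Qed.

Lemma exppoly_diff_eq0_neq j p a : a \in U -> j \in U -> a != j ->
  exppoly_diff j p a = 0 -> p a = 0.
Proof.
move=> aU jU neq_aj; apply: scale_shiftB_eq0.
by apply: contra neq_aj => /eqP/z_inj-> //.
Qed.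

Lemma exppoly_diff_eq0_self j p : j \in U ->
  exppoly_diff j p j = 0 -> poly_shift (p j) = p j.
Proof.
move=> jU /eqP; rewrite /exppoly_diff -scalerBr scale_poly_eq0 (negbTE (z_neq0 jU)).
by rewrite subr_eq0 => /eqP.
Qed.

Theorem exppoly_sum_eq0 D p :
  (\sum_(a <- U) size (p a) <= D)%N ->
  (forall l, (l < D)%N -> exppoly_sum p l = 0) ->
  forall a, a \in U -> p a = 0.
Proof.
elim: D p => [|D IHD] p size_p sum_p.
  move=> a aU; apply/eqP; rewrite -size_poly_eq0.
  by move: size_p; rewrite leqn0 sum_nat_seq_eq0 => /allP/(_ a aU).
have [/hasP[j jU pj_neq0]|/hasPn p_eq0] := boolP (has (fun a => p a != 0) U);
  last by move=> a /p_eq0; rewrite negbK => /eqP.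
have diff_eq0 : forall a, a \in U -> exppoly_diff j p a = 0.
  apply: IHD => [|l lt_lD].
    by rewrite -ltnS (leq_trans (sum_size_exppoly_diff_lt jU pj_neq0)).
  by rewrite exppoly_sum_diff !sum_p ?mulr0 ?subrr // ltnW.
have others_eq0 a : a \in U -> a != j -> p a = 0.
  by move=> aU neq_aj; apply: exppoly_diff_eq0_neq aU jU neq_aj (diff_eq0 a aU).
suff : p j = 0 by move/eqP; rewrite (negbTE pj_neq0).
apply: poly_shift_fixed_eq0; first exact: exppoly_diff_eq0_self (diff_eq0 j jU).
rewrite -[RHS](sum_p 0%N) // /exppoly_sum (bigD1_seq j) //= big1_seq.
  by rewrite expr0 mulr1 addr0.
by move=> a /andP[neq_aj aU]; rewrite others_eq0 ?horner0 ?mul0r.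
Qed.

End ExpPolySum.

Lemma big_uniq_subset (V : Type) (idx : V) (op : Monoid.com_law idx)
    (T : eqType) (U S : seq T) (f : T -> V) :
  uniq U -> uniq S -> {subset S <= U} ->
  \big[op/idx]_(a <- U | a \in S) f a = \big[op/idx]_(a <- S) f a.
Proof.
move=> U_uniq S_uniq sub_SU; rewrite -big_filter; apply/perm_big/uniq_perm.
- exact: filter_uniq.
- exact: S_uniq.
- by move=> a; rewrite mem_filter andb_idr //; apply: sub_SU.
Qed.

Section ExpSum.
Variable R : realType.

Lemma expiD (a b : R) : expi (a + b) = expi a * expi b.
Proof. by rewrite /expi cosD sinD /=; congr (_ +i* _)%C; ring. Qed.

Lemma expiMn (a : R) (n : nat) : expi (a * n%:R) = expi a ^+ n.
Proof.
elim: n => [|n IHn]; first by rewrite mulr0 expr0 /expi cos0 sin0.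
by rewrite exprS -natr1 mulrDr mulr1 expiD IHn mulrC.
Qed.

Lemma expi_neq0 (a : R) : expi a != 0.
Proof.
apply/eqP => -[cos0 sin0]; have := cos2Dsin2 a; rewrite cos0 sin0 expr0n /= add0r.
by move/eqP; rewrite eq_sym oner_eq0.
Qed.

Lemma cos_2piM_eq1 (d : R) : 0 <= d < 1 -> cos (2 * pi * d) = 1 -> d = 0.
Proof.
case/andP=> d_ge0 d_lt1; have -> : 2 * pi * d = pi * d + pi * d by ring.
rewrite cosD -!expr2 cos2sin2 => cos_eq1.
have /eqP : sin (pi * d) ^+ 2 = 0 by lra.
rewrite sqrf_eq0 => /eqP sin_eq0.
apply/eqP; rewrite eq_le d_ge0 andbT; apply: contraT; rewrite -ltNge => d_gt0.
suff : 0 < sin (pi * d) by rewrite sin_eq0 ltxx.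
apply: sin_gt0_pi; rewrite mulr_gt0 ?pi_gt0 //=.
by rewrite -[X in _ < X]mulr1 ltr_pM2l ?pi_gt0.
Qed.

Lemma expi_2piM_inj (a b : R) : 0 <= a < 1 -> 0 <= b < 1 ->
  expi (2 * pi * a) = expi (2 * pi * b) -> a = b.
Proof.
wlog le_ab : a b / a <= b.
  move=> wlog_ab a01 b01 eq_ab; have [le_ab|/ltW le_ba] := leP a b.
    exact: wlog_ab.
  exact/esym/(wlog_ab _ _ le_ba b01 a01 (esym eq_ab)).
move=> /andP[a_ge0 a_lt1] /andP[b_ge0 b_lt1] [eq_cos eq_sin].
suff : b - a = 0 by move/eqP; rewrite subr_eq0 => /eqP.
apply: cos_2piM_eq1; first by apply/andP; split; lra.
have -> : 2 * pi * (b - a) = 2 * pi * b + - (2 * pi * a) by ring.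
rewrite cosD cosN sinN eq_cos eq_sin mulrN opprK -!expr2; exact: cos2Dsin2.
Qed.

Definition restrict (F : seq R) (q : R -> {poly R[i]}) (g : R) : {poly R[i]} :=
  if g \in F then q g else 0.

Lemma expsum_restrict (U F : seq R) (q : R -> {poly R[i]}) (n : nat) :
  uniq U -> uniq F -> {subset F <= U} ->
  expsum F q n%:R = \sum_(g <- U) (restrict F q g).[n%:R] * expi (2 * pi * g) ^+ n.
Proof.
move=> U_uniq F_uniq F_sub; rewrite /expsum -(big_uniq_subset _ _ U_uniq) // big_mkcond.
apply: eq_bigr => g _; rewrite /restrict; case: ifP => _; last by rewrite horner0 mul0r.
by rewrite -expiMn rmorph_nat.
Qed.

Lemma size_restrict_le M kappa (F : seq R) (q : R -> {poly R[i]}) (g : R) :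
  admissible M kappa F q -> (size (restrict F q g) <= M.+1)%N.
Proof. by case=> _ _ _ qF; rewrite /restrict; case: ifP => [/qF[]|]; rewrite ?size_poly0. Qed.

Lemma restrict_neq0 M kappa (F : seq R) (q : R -> {poly R[i]}) (g : R) :
  admissible M kappa F q -> (restrict F q g != 0) = (g \in F).
Proof. by case=> _ _ _ qF; rewrite /restrict; case: ifP => [/qF[]|]; rewrite ?eqxx. Qed.

Lemma restrict_eq_of_samples M kappa (F F' : seq R) (q q' : R -> {poly R[i]}) :
  admissible M kappa F q -> admissible M kappa F' q' ->
  (forall l : nat, (l < 2 * kappa * M.+1)%N ->
     expsum F' q' l%:R = expsum F q l%:R) ->
  restrict F' q' =1 restrict F q.
Proof.
move=> adm_F adm_F' eq_samples g.
have [F_uniq size_F F01 _] := adm_F; have [F'_uniq size_F' F'01 _] := adm_F'.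
set U := undup (F ++ F'); have U_uniq : uniq U := undup_uniq _.
have inU x : x \in U = (x \in F) || (x \in F') by rewrite mem_undup mem_cat.
have F_sub : {subset F <= U} by move=> x xF; rewrite inU xF.
have F'_sub : {subset F' <= U} by move=> x xF'; rewrite inU xF' orbT.
have U01 x : x \in U -> 0 <= x < 1.
  by rewrite inU => /orP[/F01|/F'01] [-> ->].
have [gU|gNU] := boolP (g \in U); last first.
  by move: gNU; rewrite inU negb_or /restrict => /andP[/negbTE-> /negbTE->].
apply/eqP; rewrite -subr_eq0; apply/eqP; move: g gU.
apply: (@exppoly_sum_eq0 _ _ U (fun x => expi (2 * pi * x)) U_uniq
         _ _ (2 * kappa * M.+1)) => [a b /U01 a01 /U01 b01|a _||l lt_l].
- exact: expi_2piM_inj.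
- exact: expi_neq0.
- apply: (@leq_trans (\sum_(x <- U) M.+1)).
    apply: leq_sum => x _; rewrite (leq_trans (size_polyD _ _)) // size_polyN.
    by rewrite geq_max (size_restrict_le _ adm_F) (size_restrict_le _ adm_F').
  rewrite big_const_seq count_predT iter_addn_0 mulnC leq_mul2r.
  by have := size_undup (F ++ F'); rewrite size_cat size_F size_F' -/U; lia.
- rewrite -(subrr (expsum F q l%:R)) -[in X in X - _](eq_samples l lt_l).
  rewrite !(expsum_restrict _ _ U_uniq) // -sumrB; apply: eq_bigr => x _.
  by rewrite hornerD hornerN mulrBl.
Qed.

End ExpSum.

Theorem corollary3p1 (R : realType) (M kappa : nat) (kappa_ge1 : (1 <= kappa)%N)
    (F F' : seq R) (q q' : R -> {poly R[i]}) :
  admissible M kappa F q -> admissible M kappa F' q' ->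
  (forall l : nat, (l < 2 * kappa * M.+1)%N ->
     expsum F' q' l%:R = expsum F q l%:R) ->
  F' =i F /\ (forall g, g \in F -> q' g = q g).
Proof.
move=> adm_F adm_F' eq_samples.
have eq_restrict := restrict_eq_of_samples adm_F adm_F' eq_samples.
have mem_FF' g : (g \in F') = (g \in F).
  by rewrite -(restrict_neq0 _ adm_F') eq_restrict (restrict_neq0 _ adm_F).
split=> // g gF; have := eq_restrict g.
by rewrite /restrict gF mem_FF' gF.
Qed.
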